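(* Let $\mathcal X_i=\Delta^{d_i}$ for all $i$. Let $G$ be one of the following: (1) the $\alpha$-divergence $G(\pi_i,\sigma_i)=\frac1{\alpha(1-\alpha)}(1-\sum_j\pi_{ij}^\alpha\sigma_{ij}^{1-\alpha})$ with $\alpha\in(0,1)$; (2) the Rényi divergence $G(\pi_i,\sigma_i)=\frac1{\alpha-1}\ln(\sum_j\pi_{ij}^\alpha\sigma_{ij}^{1-\alpha})$ with $\alpha\in(0,1)$; (3) the reverse KL divergence $G(\pi_i,\sigma_i)=\sum_j\sigma_{ij}\ln(\sigma_{ij}/\pi_{ij})$. Let $\mu>0$ and let $\sigma$ be in the interior of $\mathcal X$. If $\pi^{\mu,\sigma}=\sigma$, then $\sigma$ is a Nash equilibrium of the original (unperturbed) game.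
   Context: Game. Let $N\ge1$. $\Delta^d=\{p\in[0,1]^d:\sum_jp_j=1\}$ denotes the probability simplex, and $\mathcal X=\prod_i\mathcal X_i$. Each $v_i:\mathcal X\to\mathbb R$ is differentiable, with block gradient $\nabla_{\pi_i}v_i$. The game is monotone: $\sum_i\langle\nabla_{\pi_i}v_i(\pi)-\nabla_{\pi_i}v_i(\pi'),\pi_i-\pi_i'\rangle\le0$ for all $\pi,\pi'$. A Nash equilibrium is a $\pi^*$ with $v_i(\pi^* )\ge v_i(\pi_i,\pi^*_{-i})$ for all $i$ and $\pi_i\in\mathcal X_i$. Perturbed equilibrium. For $\mu>0$ and $\sigma\in\mathcal X$, $\pi^{\mu,\sigma}$ is the profile with $\pi_i^{\mu,\sigma}\in\arg\max_{\pi_i\in\mathcal X_i}\{v_i(\pi_i,\pi^{\mu,\sigma}_{-i})-\mu G(\pi_i,\sigma_i)\}$ for all $i$. *)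

From HB Require Import structures.
From mathcomp Require Import all_boot all_order all_algebra.
From mathcomp Require Import all_classical all_reals all_analysis.
Set Implicit Arguments. Unset Strict Implicit. Unset Printing Implicit Defensive.
Import Order.TTheory GRing.Theory Num.Theory.
Import numFieldNormedType.Exports.
Local Open Scope ring_scope.

(* A strategy profile of an N-player game with strategy spaces
   X_i = Delta^{d_i} is encoded as a single row vector x : 'rV[R]_D in the
   ambient space R^D, D = sum_i d_i; the coordinate k belongs to the block of
   player [own k]. *)
Section Game.
Variables (R : realType) (N D : nat) (own : 'I_D -> 'I_N).

Definition in_block (i : 'I_N) (p : 'rV[R]_D) : Prop :=
  (forall k, own k = i -> 0 <= p ord0 k) /\
  \sum_(k < D | own k == i) p ord0 k = 1.

Definition in_X (x : 'rV[R]_D) : Prop := forall i, in_block i x.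

Definition in_interior_X (x : 'rV[R]_D) : Prop :=
  in_X x /\ forall k, 0 < x ord0 k.

Definition blk (i : 'I_N) (w : 'rV[R]_D) : 'rV[R]_D :=
  \row_k (if own k == i then w ord0 k else 0).

Definition dev (i : 'I_N) (p x : 'rV[R]_D) : 'rV[R]_D :=
  \row_k (if own k == i then p ord0 k else x ord0 k).

(* Monotone game: sum_i <grad_{pi_i} v_i(x) - grad_{pi_i} v_i(y), x_i - y_i> <= 0,
   where <grad_{pi_i} v_i(x), w_i> = 'd (v i) x (blk i w). *)
Definition monotone_game (v : 'I_N -> 'rV[R]_D -> R) : Prop :=
  forall x y, in_X x -> in_X y ->
    \sum_(i < N) ('d (v i) x (blk i (x - y)) - 'd (v i) y (blk i (x - y))) <= 0.

Definition nash (v : 'I_N -> 'rV[R]_D -> R) (s : 'rV[R]_D) : Prop :=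
  in_X s /\ forall i p, in_block i p -> v i (dev i p s) <= v i s.

Definition alpha_div (a : R) (i : 'I_N) (p s : 'rV[R]_D) : \bar R :=
  ((a * (1 - a))^-1 *
     (1 - \sum_(k < D | own k == i) p ord0 k `^ a * s ord0 k `^ (1 - a)))%:E.

Definition renyi_div (a : R) (i : 'I_N) (p s : 'rV[R]_D) : \bar R :=
  ((a - 1)^-1 *
     ln (\sum_(k < D | own k == i) p ord0 k `^ a * s ord0 k `^ (1 - a)))%:E.

(* reverse KL: sum_j s_j ln (s_j / p_j), with 0 ln(0/.) = 0 and
   value +oo when some s_j > 0 has p_j = 0 *)
Definition rkl_div (i : 'I_N) (p s : 'rV[R]_D) : \bar R :=
  if `[< exists k, [/\ own k = i, s ord0 k != 0 & p ord0 k = 0] >]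
  then +oo%E
  else (\sum_(k < D | (own k == i) && (s ord0 k != 0))
          s ord0 k * ln (s ord0 k / p ord0 k))%:E.

Definition admissible_div (G : 'I_N -> 'rV[R]_D -> 'rV[R]_D -> \bar R) : Prop :=
  (exists a, 0 < a < 1 /\ G = alpha_div a) \/
  (exists a, 0 < a < 1 /\ G = renyi_div a) \/
  G = rkl_div.

Definition perturbed_eq (v : 'I_N -> 'rV[R]_D -> R)
    (G : 'I_N -> 'rV[R]_D -> 'rV[R]_D -> \bar R) (mu : R) (s pi : 'rV[R]_D) : Prop :=
  in_X pi /\
  forall i p, in_block i p ->
    ((v i (dev i p pi))%:E - mu%:E * G i p s <= (v i pi)%:E - mu%:E * G i pi s)%E.

End Game.

(* Fix a player i and a deviation p, and move along the segment
   q_t = sigma + t (p - sigma) of player i's simplex.  Monotonicity of the game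
   makes f t = v_i(q_t, sigma_{-i}) concave, so t (f 1 - f 0) <= f t - f 0.
   Since sigma is its own perturbed equilibrium and G(sigma_i, sigma_i) = 0,
   f t - f 0 <= mu G(q_t, sigma_i), and each of the three divergences is bounded
   by a multiple of the chi-square divergence sum_j (q_j - sigma_j)^2 / q_j,
   which is O(t^2).  Hence t (f 1 - f 0) = O(t^2) as t -> 0, i.e. f 1 <= f 0. *)

From HB Require Import structures.
From mathcomp Require Import all_boot all_order all_algebra.
From mathcomp Require Import all_classical all_reals all_analysis.
From mathcomp Require Import ring lra.
Import Order.TTheory GRing.Theory Num.Theory.
Import numFieldNormedType.Exports.
Set Implicit Arguments. Unset Strict Implicit.
Local Open Scope ring_scope.

Section ScalarInequalities.
Variable R : realType.
Implicit Types a q s : R.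

Lemma powR_mul_powR1B a s : 0 < s -> s `^ a * s `^ (1 - a) = s.
Proof.
move=> s0; rewrite -powRD; last by rewrite (gt_eqF s0) implybT.
by rewrite addrC subrK powRr1 // ltW.
Qed.

Lemma harmonic_le_geometric_mean a q s : 0 < a < 1 -> 0 < q -> 0 < s ->
  s * q <= q `^ a * s `^ (1 - a) * (a * s + (1 - a) * q).
Proof.
move=> /andP[a0 a1] q0 s0.
have := @concave_ln R (Itv01 (ltW a0) (ltW a1)) q^-1 s^-1.
rewrite !invr_gt0 => /(_ q0 s0).
rewrite !convRE /= /unstable.onem !lnV ?posrE // -[_ <= ln _]ler_expR lnK; last first.
  by rewrite posrE addr_gt0 // divr_gt0 // subr_gt0.
rewrite (_ : a * - ln q + _ = - (a * ln q + (1 - a) * ln s)); last by ring.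
rewrite expRN -[leLHS]mul1r ler_pdivrMr ?expR_gt0 // => h.
have -> : q `^ a * s `^ (1 - a) = expR (a * ln q + (1 - a) * ln s).
  by rewrite /powR !gt_eqF // -expRD.
set E := expR _ in h *.
have -> : E * (a * s + (1 - a) * q) = (a / q + (1 - a) / s) * E * (s * q).
  by field; rewrite !gt_eqF.
by rewrite -[leLHS]mul1r ler_pM2r ?mulr_gt0.
Qed.

Lemma geometric_mean_ge_quadratic a q s : 0 < a < 1 -> 0 < q -> 0 < s ->
  s + a * (q - s) - a * (q - s) ^+ 2 / q <= q `^ a * s `^ (1 - a).
Proof.
move=> a01 q0 s0; have /andP[a0 a1] := a01.
have m0 : 0 < a * s + (1 - a) * q by rewrite addr_gt0 // mulr_gt0 // subr_gt0.
rewrite -(ler_pM2r m0); apply: le_trans (harmonic_le_geometric_mean a01 q0 s0).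
have -> : s * q = (s + a * (q - s) - a * (q - s) ^+ 2 / q) * (a * s + (1 - a) * q)
   + a ^+ 2 * (q - s) ^+ 2 * s / q.
  by field; rewrite gt_eqF.
rewrite lerDl; apply: divr_ge0 (ltW q0); apply: mulr_ge0 (ltW s0).
by apply: mulr_ge0; apply: sqr_ge0.
Qed.

Lemma geometric_mean_ge_half a q s : 0 < a < 1 -> 0 < s -> s / 2 <= q ->
  s / 2 <= q `^ a * s `^ (1 - a).
Proof.
move=> a01 s0 sq; have /andP[a0 a1] := a01.
have q0 : 0 < q by apply: lt_le_trans sq; rewrite divr_gt0.
have m0 : 0 < a * s + (1 - a) * q by rewrite addr_gt0 // mulr_gt0 // subr_gt0.
rewrite -(ler_pM2r m0); apply: le_trans _ (harmonic_le_geometric_mean a01 q0 s0).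
have : a * s <= (1 + a) * q by nra.
have := mulr_ge0 (ltW s0) (ltW a0). nra.
Qed.

Lemma mul_ln_div_le q s : 0 < q -> 0 < s ->
  s * ln (s / q) <= (q - s) ^+ 2 / q - (q - s).
Proof.
move=> q0 s0.
have -> : (q - s) ^+ 2 / q - (q - s) = s * (s / q - 1) by field; rewrite gt_eqF.
rewrite ler_pM2l // -[X in ln X](addrNK 1) addrC.
by apply: le_ln1Dx; rewrite ltrBrDl subrr divr_gt0.
Qed.

End ScalarInequalities.

Section DivergenceBounds.
Variables (R : realType) (N D : nat) (own : 'I_D -> 'I_N).

Definition chi2_div (i : 'I_N) (q s : 'rV[R]_D) : R :=
  \sum_(k < D | own k == i) (q ord0 k - s ord0 k) ^+ 2 / q ord0 k.

Definition affinity (a : R) (i : 'I_N) (q s : 'rV[R]_D) : R :=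
  \sum_(k < D | own k == i) q ord0 k `^ a * s ord0 k `^ (1 - a).

Variables (a : R) (i : 'I_N) (s q : 'rV[R]_D).
Hypotheses (a01 : 0 < a < 1) (s_blk : in_block own i s) (q_blk : in_block own i q).
Hypotheses (s_gt0 : forall k, own k = i -> 0 < s ord0 k)
  (q_gt0 : forall k, own k = i -> 0 < q ord0 k).

Lemma chi2_div_ge0 : 0 <= chi2_div i q s.
Proof. by apply: sumr_ge0 => k /eqP/q_gt0 qk; rewrite divr_ge0 ?sqr_ge0 ?ltW. Qed.

Lemma affinity_self : affinity a i s s = 1.
Proof.
rewrite -s_blk.2; apply: eq_bigr => k /eqP/s_gt0 sk.
by rewrite powR_mul_powR1B.
Qed.

Lemma affinity_ge_chi2 : 1 - a * chi2_div i q s <= affinity a i q s.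
Proof.
have -> : 1 - a * chi2_div i q s = \sum_(k < D | own k == i)
    (s ord0 k + a * (q ord0 k - s ord0 k) - a * (q ord0 k - s ord0 k) ^+ 2 / q ord0 k).
  rewrite sumrB big_split /= -!mulr_sumr sumrB s_blk.2 q_blk.2 subrr mulr0 addr0.
  by rewrite mulr_sumr; congr (_ - _); apply: eq_bigr => k _; rewrite mulrA.
apply: ler_sum => k /eqP ki.
exact: geometric_mean_ge_quadratic a01 (q_gt0 ki) (s_gt0 ki).
Qed.

Lemma affinity_ge_half : (forall k, own k = i -> s ord0 k / 2 <= q ord0 k) ->
  1 / 2 <= affinity a i q s.
Proof.
move=> sq; rewrite -{1}s_blk.2 mulr_suml; apply: ler_sum => k /eqP ki.
exact: geometric_mean_ge_half a01 (s_gt0 ki) (sq k ki).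
Qed.

Lemma alpha_div_self : alpha_div own a i s s = 0%:E.
Proof. by rewrite /alpha_div -/(affinity a i s s) affinity_self subrr mulr0. Qed.

Lemma alpha_div_le_chi2 :
  (alpha_div own a i q s <= ((1 - a)^-1 * chi2_div i q s)%:E)%E.
Proof.
have /andP[a0 a1] := a01.
rewrite /alpha_div -/(affinity a i q s) lee_fin.
have -> : (1 - a)^-1 * chi2_div i q s = (a * (1 - a))^-1 * (a * chi2_div i q s).
  by field; rewrite !gt_eqF // subr_gt0.
rewrite ler_pM2l ?invr_gt0 ?mulr_gt0 ?subr_gt0 //.
by have := affinity_ge_chi2; lra.
Qed.

Lemma renyi_div_self : renyi_div own a i s s = 0%:E.
Proof. by rewrite /renyi_div -/(affinity a i s s) affinity_self ln1 mulr0. Qed.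

Lemma renyi_div_le_chi2 : (forall k, own k = i -> s ord0 k / 2 <= q ord0 k) ->
  (renyi_div own a i q s <= (2 * a / (1 - a) * chi2_div i q s)%:E)%E.
Proof.
move=> sq; have /andP[a0 a1] := a01.
rewrite /renyi_div -/(affinity a i q s) lee_fin.
set S := affinity a i q s; have S_half : 1 / 2 <= S := affinity_ge_half sq.
have S0 : 0 < S by apply: lt_le_trans S_half; rewrite divr_gt0.
have S_inv0 : 0 < S^-1 by rewrite invr_gt0.
have lnS : - ln S <= S^-1 - 1.
  rewrite -lnV ?posrE // -[X in ln X](subrK 1) addrC.
  by apply: le_ln1Dx; rewrite ltrBrDl subrr invr_gt0.
have invS_le : S^-1 - 1 <= 2 * a * chi2_div i q s.
  have invS2 : S^-1 <= 2 by rewrite invf_ple ?posrE // -div1r.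
  have S_le : 1 - S <= a * chi2_div i q s by have := affinity_ge_chi2; rewrite -/S; lra.
  have -> : S^-1 - 1 = S^-1 * (1 - S) by rewrite mulrBr mulr1 mulVf ?gt_eqF.
  have := ler_wpM2l (ltW S_inv0) S_le.
  have := ler_wpM2r (mulr_ge0 (ltW a0) chi2_div_ge0) invS2; lra.
have -> : (a - 1)^-1 * ln S = (1 - a)^-1 * - ln S by rewrite -opprB invrN mulNr mulrN.
rewrite mulrAC mulrC ler_pM2r ?invr_gt0 ?subr_gt0 //; exact: le_trans lnS invS_le.
Qed.

Lemma rkl_div_self : rkl_div own i s s = 0%:E.
Proof.
rewrite /rkl_div asboolF; last by case=> k [_ /eqP].
by rewrite big1 // => k /andP[_ sk]; rewrite divff // ln1 mulr0.
Qed.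

Lemma rkl_div_le_chi2 : (rkl_div own i q s <= (chi2_div i q s)%:E)%E.
Proof.
rewrite /rkl_div asboolF; last by case=> k [/q_gt0 + _ qk]; rewrite qk ltxx.
rewrite lee_fin (eq_bigl (fun k => own k == i)); last first.
  by move=> k; case: eqP => //= /s_gt0 sk; rewrite gt_eqF.
apply: le_trans (ler_sum _ (fun k ki => mul_ln_div_le (q_gt0 (eqP ki)) (s_gt0 (eqP ki)))) _.
by rewrite sumrB [X in _ - X]sumrB q_blk.2 s_blk.2 subrr subr0.
Qed.

End DivergenceBounds.

(* The restriction q >= s / 2 keeps the Renyi affinity away from 0. *)
Lemma admissible_div_le_chi2 (R : realType) (N D : nat) (own : 'I_D -> 'I_N)
    (G : 'I_N -> 'rV[R]_D -> 'rV[R]_D -> \bar R) :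
  admissible_div own G -> exists2 c : R, 0 <= c &
  forall i s q, in_interior_X own s -> in_block own i q ->
    (forall k, own k = i -> s ord0 k / 2 <= q ord0 k) ->
    G i s s = 0%:E /\ (G i q s <= (c * chi2_div own i q s)%:E)%E.
Proof.
have q_gt0 i (s q : 'rV[R]_D) : in_interior_X own s ->
    (forall k, own k = i -> s ord0 k / 2 <= q ord0 k) -> forall k, own k = i -> 0 < q ord0 k.
  by move=> [_ s_gt0] sq k ki; apply: lt_le_trans (sq k ki); rewrite divr_gt0.
case=> [[a [a01 ->]] | [[a [a01 ->]] | ->]].
- have /andP[_ a1] := a01.
  exists (1 - a)^-1 => [|i s q s_int q_blk sq]; first by rewrite invr_ge0 subr_ge0 ltW.
  have [/(_ i) s_blk s_gt0] := s_int; split; first exact: alpha_div_self.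
  exact: alpha_div_le_chi2 a01 s_blk q_blk (fun k _ => s_gt0 k) (q_gt0 _ _ _ s_int sq).
- have /andP[a0 a1] := a01.
  exists (2 * a / (1 - a)) => [|i s q s_int q_blk sq].
    by rewrite divr_ge0 ?mulr_ge0 ?subr_ge0 ?ltW.
  have [/(_ i) s_blk s_gt0] := s_int; split; first exact: renyi_div_self.
  exact: renyi_div_le_chi2 a01 s_blk q_blk (fun k _ => s_gt0 k) (q_gt0 _ _ _ s_int sq) sq.
- exists 1 => // i s q s_int q_blk sq.
  have [/(_ i) s_blk s_gt0] := s_int; split; first exact: rkl_div_self.
  rewrite mul1r; exact: rkl_div_le_chi2 s_blk q_blk (fun k _ => s_gt0 k) (q_gt0 _ _ _ s_int sq).
Qed.

Section Calculus.
Variable R : realType.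
Local Open Scope classical_set_scope.

Lemma is_derive_along_line (n : nat) (h : 'rV[R]_n -> R) (s w : 'rV[R]_n) (u : R) :
  differentiable h (s + u *: w) ->
  is_derive u (1 : R) (fun t : R => h (s + t *: w)) ('d h (s + u *: w) w).
Proof.
move=> dh.
have E : (fun k : R => k^-1 *: (((fun t : R => h (s + t *: w)) \o shift u) (k *: 1)
      - h (s + u *: w)))
    = (fun k : R => k^-1 *: ((h \o shift (s + u *: w)) (k *: w) - h (s + u *: w))).
  apply/funext => k /=; congr (_ *: (_ - _)); congr (h _).
  by rewrite [_%:A]mulr1 scalerDl addrCA.
split; first by have := @diff_derivable R _ _ h _ w dh; rewrite /derivable E.
by rewrite /derive E; exact: deriveE.
Qed.

Lemma chord_le_of_deriv_antitone (f g : R -> R) (t : R) : 0 < t < 1 ->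
  (forall u : R, 0 <= u <= 1 -> is_derive u (1 : R) f (g u)) ->
  (forall a b : R, 0 <= a -> a <= b -> b <= 1 -> g b <= g a) ->
  t * (f 1 - f 0) <= f t - f 0.
Proof.
move=> /andP[t0 t1] f'g g_anti.
have f_cont a b : 0 <= a -> b <= 1 -> {within `[a, b]%classic, continuous f}.
  move=> a0 b1; apply: derivable_within_continuous => u.
  rewrite in_itv /= => /andP[au ub].
  by have := f'g u; rewrite (le_trans a0 au) (le_trans ub b1) => /(_ isT) [].
have [c1 c1i E1] : exists2 c, c \in `]0, t[%R & f t - f 0 = g c * (t - 0).
  apply: MVT => //; last exact: f_cont (lexx _) (ltW t1).
  move=> u; rewrite in_itv /= => /andP[u0 ut]; apply: f'g.
  by rewrite !ltW // (lt_trans ut t1).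
have [c2 c2i E2] : exists2 c, c \in `]t, 1[%R & f 1 - f t = g c * (1 - t).
  apply: MVT => //; last exact: f_cont (ltW t0) (lexx _).
  move=> u; rewrite in_itv /= => /andP[tu u1]; apply: f'g.
  by rewrite !ltW // (lt_trans t0 tu).
move: c1i c2i; rewrite !in_itv /= => /andP[c10 c1t] /andP[tc2 c21].
have g12 : g c2 <= g c1 by apply: g_anti; rewrite ?ltW // (lt_trans c1t tc2).
have -> : f 1 - f 0 = (f 1 - f t) + (f t - f 0) by ring.
rewrite E1 E2 subr0.
have := ler_wpM2l (mulr_ge0 (ltW t0) (eqbRL (subr_ge0 t 1) (ltW t1))) g12; nra.
Qed.

Lemma le0_of_le_quadratic (d M : R) : 0 <= M ->
  (forall t, 0 < t <= 1 / 2 -> t * d <= M * t ^+ 2) -> d <= 0.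
Proof.
move=> M0 dM; rewrite leNgt; apply/negP => d0.
have den0 : 0 < 2 * M + 2 + 2 * d by lra.
(* Any t <= 1 / 2 with M t < d contradicts the hypothesis. *)
set t := d / (2 * M + 2 + 2 * d).
have tE : t * (2 * M + 2 + 2 * d) = d by rewrite divfK ?gt_eqF.
have t0 : 0 < t by rewrite divr_gt0.
have t12 : t <= 1 / 2 by nra.
have d_le : d <= M * t.
  by rewrite -(ler_pM2l t0) mulrCA -expr2 dM // t0 t12.
nra.
Qed.

End Calculus.

Section Deviations.
Variables (R : realType) (N D : nat) (own : 'I_D -> 'I_N).
Implicit Types (i j : 'I_N) (p s w : 'rV[R]_D).

Lemma blk_scale_blk i j (c : R) w :
  blk own j (c *: blk own i w) = if j == i then c *: blk own i w else 0.
Proof.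
case: eqVneq => [->|ji]; apply/rowP => k; rewrite !mxE.
  by case: eqP => _ //; rewrite mulr0.
by case: eqVneq => [okj|//]; rewrite ifN ?mulr0 // okj.
Qed.

Lemma dev_segment i p s (t : R) :
  dev own i (s + t *: (p - s)) s = s + t *: blk own i (p - s).
Proof. by apply/rowP => k; rewrite !mxE; case: eqP; rewrite ?mulr0 ?addr0. Qed.

Lemma dev_in_X i p s : in_X own s -> in_block own i p -> in_X own (dev own i p s).
Proof.
move=> s_X p_blk j.
have devE k : own k = j -> dev own i p s ord0 k = (if j == i then p else s) ord0 k.
  by move=> <-; rewrite mxE; case: eqP.
have [j_ge0 j_sum] : in_block own j (if j == i then p else s).
  by case: eqVneq => [->|_].
split=> [k kj|]; first by rewrite devE // j_ge0.
by rewrite -j_sum; apply: eq_bigr => k /eqP; exact: devE.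
Qed.

Lemma segment_in_block i p s (t : R) : in_block own i p -> in_block own i s ->
  0 <= t <= 1 -> in_block own i (s + t *: (p - s)).
Proof.
move=> [p_ge0 p_sum] [s_ge0 s_sum] /andP[t0 t1]; split=> [k ki|].
  rewrite !mxE (_ : _ + _ = (1 - t) * s ord0 k + t * p ord0 k); last by ring.
  by rewrite addr_ge0 ?mulr_ge0 ?subr_ge0 ?p_ge0 ?s_ge0.
rewrite (eq_bigr (fun k => s ord0 k + t * (p ord0 k - s ord0 k))); last first.
  by move=> k _; rewrite !mxE.
by rewrite big_split /= -mulr_sumr sumrB p_sum s_sum subrr mulr0 addr0.
Qed.

Lemma segment_ge_half i p s (t : R) : in_block own i p -> in_block own i s ->
  0 <= t <= 1 / 2 -> forall k, own k = i -> s ord0 k / 2 <= (s + t *: (p - s)) ord0 k.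
Proof.
move=> [p_ge0 _] [s_ge0 _] /andP[t0 t12] k ki; rewrite !mxE.
have := mulr_ge0 t0 (p_ge0 k ki).
have := mulr_ge0 (eqbRL (subr_ge0 t (1 / 2)) t12) (s_ge0 k ki); nra.
Qed.

Lemma chi2_segment_le i p s (t : R) : in_block own i p -> in_block own i s ->
  (forall k, own k = i -> 0 < s ord0 k) -> 0 <= t <= 1 / 2 ->
  chi2_div own i (s + t *: (p - s)) s <= t ^+ 2 * (2 * chi2_div own i s p).
Proof.
move=> p_blk s_blk s_gt0 t12.
rewrite mulr_sumr mulr_sumr; apply: ler_sum => k /eqP ki.
set q := (s + t *: (p - s)) ord0 k.
have sq : s ord0 k / 2 <= q := segment_ge_half p_blk s_blk t12 ki.
have q0 : 0 < q by apply: lt_le_trans sq; rewrite divr_gt0 ?s_gt0.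
have -> : q - s ord0 k = t * (p ord0 k - s ord0 k) by rewrite /q !mxE; ring.
rewrite [leRHS](_ : _ = (t * (p ord0 k - s ord0 k)) ^+ 2 * (2 / s ord0 k)); last first.
  by ring.
apply: ler_wpM2l; first exact: sqr_ge0.
by rewrite -[2 / _]invf_div lef_pV2 ?posrE ?divr_gt0 ?s_gt0.
Qed.

End Deviations.

Section MonotoneGame.
Variables (R : realType) (N D : nat) (own : 'I_D -> 'I_N).

Lemma diff_blk_scale_blk (h : 'rV[R]_D -> R) (x w : 'rV[R]_D) (i j : 'I_N) (c : R) :
  'd h x (blk own j (c *: blk own i w))
    = if j == i then c * 'd h x (blk own i w) else 0.
Proof. by rewrite blk_scale_blk; case: eqP => _; [exact: linearZ | exact: raddf0]. Qed.

Variable v : 'I_N -> 'rV[R]_D -> R.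

Lemma monotone_game_deriv_antitone (i : 'I_N) (s w : 'rV[R]_D) :
  monotone_game own v ->
  (forall t : R, 0 <= t <= 1 -> in_X own (s + t *: blk own i w)) ->
  forall a b : R, 0 <= a -> a <= b -> b <= 1 ->
  'd (v i) (s + b *: blk own i w) (blk own i w)
    <= 'd (v i) (s + a *: blk own i w) (blk own i w).
Proof.
move=> v_mono seg_X a b a0 ab b1.
have term j : 'd (v j) (s + b *: blk own i w) (blk own j ((b - a) *: blk own i w))
    - 'd (v j) (s + a *: blk own i w) (blk own j ((b - a) *: blk own i w))
    = if j == i then (b - a) * ('d (v i) (s + b *: blk own i w) (blk own i w)
                         - 'd (v i) (s + a *: blk own i w) (blk own i w)) else 0.
  rewrite [X in X - _]diff_blk_scale_blk [X in _ - X]diff_blk_scale_blk.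
  by case: eqP => [->|_]; [rewrite mulrBr | exact: subrr].
have := v_mono _ _ (seg_X b _) (seg_X a _).
rewrite a0 b1 (le_trans a0 ab) (le_trans ab b1).
rewrite opprD addrACA subrr add0r -scalerBl (eq_bigr _ (fun j _ => term j)).
rewrite -big_mkcond big_pred1_eq => /(_ isT isT).
have [<-|a_neq_b] := eqVneq a b; first by rewrite lexx.
by rewrite pmulr_rle0 ?subr_le0 // subr_gt0 lt_neqAle a_neq_b.
Qed.

Lemma self_perturbed_eq_gain_le (G : 'I_N -> 'rV[R]_D -> 'rV[R]_D -> \bar R)
    (mu : R) (s p : 'rV[R]_D) (i : 'I_N) (b : R) :
  0 < mu -> perturbed_eq own v G mu s s -> in_block own i p ->
  G i s s = 0%:E -> (G i p s <= b%:E)%E ->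
  v i (dev own i p s) - v i s <= mu * b.
Proof.
move=> mu0 [_ s_fix] p_blk Gss; have := s_fix i p p_blk.
rewrite Gss mule0 sube0; case: (G i p s) => [g | // |].
- rewrite -EFinM -EFinB !lee_fin => h gb.
  by have := ler_wpM2l (ltW mu0) gb; lra.
- by rewrite gt0_muleNy ?lte_fin // oppeK addey.
Qed.

Lemma deviation_chord_le (i : 'I_N) (s p : 'rV[R]_D) (t : R) :
  (forall x, in_X own x -> differentiable (v i) x) -> monotone_game own v ->
  in_X own s -> in_block own i p -> 0 < t < 1 ->
  t * (v i (dev own i p s) - v i s) <= v i (dev own i (s + t *: (p - s)) s) - v i s.
Proof.
move=> v_diff v_mono s_X p_blk t01.
pose f u := v i (s + u *: blk own i (p - s)).
have seg_X (u : R) : 0 <= u <= 1 -> in_X own (s + u *: blk own i (p - s)).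
  by move=> u01; rewrite -dev_segment; apply/dev_in_X/segment_in_block.
have -> : v i (dev own i p s) = f 1 by rewrite /f -dev_segment scale1r addrC subrK.
have -> : v i s = f 0 by rewrite /f scale0r addr0.
rewrite dev_segment; apply: chord_le_of_deriv_antitone t01 _ _ => [u u01|].
  exact/is_derive_along_line/v_diff/seg_X.
exact: monotone_game_deriv_antitone.
Qed.

Lemma self_perturbed_eq_segment_gain_le (G : 'I_N -> 'rV[R]_D -> 'rV[R]_D -> \bar R)
    (mu : R) (s p : 'rV[R]_D) (i : 'I_N) :
  admissible_div own G -> 0 < mu -> in_interior_X own s ->
  perturbed_eq own v G mu s s -> in_block own i p ->
  exists2 M : R, 0 <= M & forall t : R, 0 <= t <= 1 / 2 ->
    v i (dev own i (s + t *: (p - s)) s) - v i s <= M * t ^+ 2.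
Proof.
move=> /admissible_div_le_chi2 [c c0 G_le] mu0 s_int s_fix p_blk.
have [/(_ i) s_blk s_gt0] := s_int.
exists (mu * c * (2 * chi2_div own i s p)) => [|t t12].
  by rewrite !mulr_ge0 ?(ltW mu0) //; apply: chi2_div_ge0 => k _; exact: s_gt0.
have t01 : 0 <= t <= 1.
  by case/andP: t12 => -> /le_trans; apply; rewrite ler_pdivrMr // mul1r ler1n.
have q_blk := segment_in_block p_blk s_blk t01.
have [Gss Gq] := G_le i _ _ s_int q_blk (segment_ge_half p_blk s_blk t12).
apply: le_trans (self_perturbed_eq_gain_le mu0 s_fix q_blk Gss Gq) _.
rewrite (_ : _ * t ^+ 2 = mu * (c * (t ^+ 2 * (2 * chi2_div own i s p)))); last by ring.
apply/ler_wpM2l/ler_wpM2l => //; first exact: ltW.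
exact: chi2_segment_le (fun k _ => s_gt0 k) t12.
Qed.

End MonotoneGame.

Unset Implicit Arguments.

Theorem lemma17 (R : realType) (N D : nat) (own : 'I_D -> 'I_N)
  (v : 'I_N -> 'rV[R]_D -> R)
  (Hdiff : forall i x, in_X own x -> differentiable (v i) x)
  (Hmono : monotone_game own v)
  (G : 'I_N -> 'rV[R]_D -> 'rV[R]_D -> \bar R)
  (HG : admissible_div own G)
  (mu : R) (Hmu : 0 < mu)
  (sigma : 'rV[R]_D) (Hsigma : in_interior_X own sigma)
  (Hfix : perturbed_eq own v G mu sigma sigma) :
  nash own v sigma.
Proof.
have [s_X _] := Hsigma; split=> // i p p_blk.
have [M M0 gain] := self_perturbed_eq_segment_gain_le HG Hmu Hsigma Hfix p_blk.
rewrite -subr_le0; apply: (le0_of_le_quadratic M0) => t /andP[t0 t12].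
have t1 : t < 1 by apply: le_lt_trans t12 _; rewrite ltr_pdivrMr // mul1r ltr1n.
apply: le_trans (deviation_chord_le (Hdiff i) Hmono s_X p_blk _) (gain t _).
  by rewrite t0 t1.
by rewrite (ltW t0) t12.
Qed.
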